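(* Let $V$ be a finite node set with $|V|=n$ and let $E,E'$ be edge sets of simple undirected graphs on $V$ whose symmetric difference has at most $K$ edges. For an edge set $F$ let $A(F)$ be its adjacency matrix, $D(F)$ the diagonal matrix of self-loop-augmented degrees $\tilde d_v=\deg_F(v)+1$, and $\tilde A(F)=D(F)^{-1/2}(A(F)+I)D(F)^{-1/2}$. Let $\tilde d_{\min}$ and $\tilde d_{\max}$ be the minimum and maximum self-loop-augmented degrees over the graphs $(V,E)$ and $(V,E')$, and assume $\tilde d_{\max}/\tilde d_{\min}\le c$. Then \[ \|\tilde A(E')-\tilde A(E)\|_2\le C\,\frac{K}{\tilde d_{\min}}, \] where $\|\cdot\|_2$ is the spectral norm and $C$ is a constant depending only on $c$. *)

From HB Require Import structures.
From mathcomp Require Import all_boot all_order all_algebra.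
From mathcomp Require Import classical_sets reals.
Set Implicit Arguments. Unset Strict Implicit. Unset Printing Implicit Defensive.
Import Order.TTheory GRing.Theory Num.Theory.
Local Open Scope ring_scope.

(* Node set V = 'I_n; an edge set F is a set of 2-element subsets of V
   (simple undirected graph: no loops, no multi-edges). *)
Definition simple_edges n (F : {set {set 'I_n}}) : Prop :=
  forall e, e \in F -> #|e| = 2%N.

Definition deg n (F : {set {set 'I_n}}) (v : 'I_n) : nat :=
  #|[set u : 'I_n | [set u; v] \in F]|.

Definition aug_deg n (F : {set {set 'I_n}}) (v : 'I_n) : nat := (deg F v).+1.

Definition adj (R : ringType) n (F : {set {set 'I_n}}) : 'M[R]_n :=
  \matrix_(u, v) (([set u; v] \in F) : nat)%:R.

Definition Dinvsqrt (R : rcfType) n (F : {set {set 'I_n}}) : 'M[R]_n :=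
  diag_mx (\row_v (Num.sqrt ((aug_deg F v)%:R : R))^-1).

Definition norm_adj (R : rcfType) n (F : {set {set 'I_n}}) : 'M[R]_n :=
  Dinvsqrt R F *m (adj R F + 1%:M) *m Dinvsqrt R F.

Definition vnorm2 (R : rcfType) n (x : 'cV[R]_n) : R :=
  Num.sqrt (\sum_i x i ord0 ^+ 2).

Definition spectral_norm (R : realType) n (M : 'M[R]_n) : R :=
  sup [set vnorm2 (M *m x) | x in [set x : 'cV[R]_n | vnorm2 x <= 1]]%classic.

Definition symdiff n (E E' : {set {set 'I_n}}) : {set {set 'I_n}} :=
  (E :\: E') :|: (E' :\: E).

(* min / max self-loop-augmented degree over both graphs (V nonempty;
   the identity n of the min is never attained-below since aug degrees <= n) *)
Definition dmin n (E E' : {set {set 'I_n}}) : nat :=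
  \big[minn/n]_(v < n) minn (aug_deg E v) (aug_deg E' v).
Definition dmax n (E E' : {set {set 'I_n}}) : nat :=
  \max_(v < n) maxn (aug_deg E v) (aug_deg E' v).

From HB Require Import structures.
From mathcomp Require Import all_boot all_order all_algebra.
From mathcomp Require Import classical_sets reals.
From mathcomp Require Import ring lra.
Import Order.TTheory GRing.Theory Num.Theory.
Set Implicit Arguments. Unset Strict Implicit. Unset Printing Implicit Defensive.
Local Open Scope ring_scope.

(* The spectral norm is at most the sum of the absolute values of the entries.
   Write p_F(u) = d~_F(u)^(-1/2) <= t := d~_min^(-1/2) and B = A + I, so that
   the (u, v) entry of A~(E') - A~(E) is p'_u B'_uv p'_v - p_u B_uv p_v.  The
   change of B contributes at most |B'_uv - B_uv| t^2, and since the augmented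
   degree of u moves by at most its degree delta_u in the symmetric difference,
   |p'_u - p_u| <= delta_u t^3, so the change of p contributes at most
   B_uv (delta_u + delta_v) t^4.  Summing, sum_u delta_u <= 2K (each edge of
   the symmetric difference has two ends) and sum_v B_uv = d~_u <= d~_max, so
   the total is at most 2K/d~_min + 4 d~_max K/d~_min^2 <= (2 + 4c) K/d~_min. *)

Section EuclideanNorm.
Variables (R : rcfType) (n : nat).

Lemma vnorm2_le_sum_norm (y : 'cV[R]_n) : vnorm2 y <= \sum_i `|y i ord0|.
Proof.
have sum_ge0 : 0 <= \sum_i `|y i ord0| by apply: sumr_ge0.
rewrite /vnorm2 -(ger0_norm sum_ge0) -sqrtr_sqr ler_sqrt ?exprn_ge0 //.
rewrite expr2 mulr_suml; apply: ler_sum => i _.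
rewrite -real_normK ?num_real // expr2 ler_wpM2l //.
by rewrite (bigD1 i) //= lerDl sumr_ge0.
Qed.

Lemma vnorm2_le1_coord (x : 'cV[R]_n) j : vnorm2 x <= 1 -> `|x j ord0| <= 1.
Proof.
rewrite /vnorm2 -sqrtr1 ler_sqrt // => sum_sq_le1.
have : x j ord0 ^+ 2 <= 1.
  apply: le_trans sum_sq_le1; rewrite (bigD1 j) //= lerDl.
  by rewrite sumr_ge0 // => i _; apply: sqr_ge0.
by rewrite -(ler_sqrt _ ler01) sqrtr1 sqrtr_sqr.
Qed.

End EuclideanNorm.

Lemma spectral_norm_le_sum_norm (R : realType) n (M : 'M[R]_n) :
  spectral_norm M <= \sum_i \sum_j `|M i j|.
Proof.
apply: ge_sup.
  exists (vnorm2 (M *m 0)), 0 => //=.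
  by rewrite /vnorm2 big1 ?sqrtr0 // => i _; rewrite mxE expr0n.
move=> _ [x /= x_le1 <-]; apply: le_trans (vnorm2_le_sum_norm _) _.
apply: ler_sum => i _; rewrite mxE; apply: le_trans (ler_norm_sum _ _ _) _.
apply: ler_sum => j _; rewrite normrM ler_piMr //; exact: vnorm2_le1_coord.
Qed.

Lemma norm_invsqrtB_le (R : rcfType) (m x y : R) :
  0 < m -> m <= x -> m <= y ->
  `|(Num.sqrt y)^-1 - (Num.sqrt x)^-1| <= `|y - x| * (Num.sqrt m)^-1 ^+ 3.
Proof.
move=> m_gt0 m_le_x m_le_y.
have x_ge0 : 0 <= x by rewrite ltW // (lt_le_trans m_gt0).
have y_ge0 : 0 <= y by rewrite ltW // (lt_le_trans m_gt0).
set a := Num.sqrt x; set b := Num.sqrt y; set s := Num.sqrt m.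
have s_gt0 : 0 < s by rewrite sqrtr_gt0.
have s_le_a : s <= a by rewrite ler_sqrt.
have s_le_b : s <= b by rewrite ler_sqrt.
have a_gt0 : 0 < a by apply: lt_le_trans s_le_a.
have b_gt0 : 0 < b by apply: lt_le_trans s_le_b.
have -> : b^-1 - a^-1 = (a - b) * (a^-1 * b^-1).
  by field; rewrite !gt_eqF.
have -> : y - x = (a - b) * - (a + b).
  have [-> ->] : x = a ^+ 2 /\ y = b ^+ 2 by rewrite !sqr_sqrtr.
  by ring.
rewrite !normrM -mulrA; apply: ler_wpM2l => //.
have [a_ge0 b_ge0 s_ge0] := And3 (ltW a_gt0) (ltW b_gt0) (ltW s_gt0).
rewrite normrN !ger0_norm ?addr_ge0 ?mulr_ge0 ?invr_ge0 //.
have inv_le_sV c : s <= c -> c^-1 <= s^-1.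
  by move=> s_le_c; rewrite lef_pV2 // posrE (lt_le_trans s_gt0).
have one_le : 1 <= (a + b) * s^-1.
  by rewrite ler_pdivlMr // mul1r (le_trans s_le_a) // lerDl.
have -> : (a + b) * s^-1 ^+ 3 = ((a + b) * s^-1) * (s^-1 * s^-1) by ring.
rewrite -[X in X <= _]mul1r ler_pM ?mulr_ge0 ?invr_ge0 //.
by rewrite ler_pM ?invr_ge0 // inv_le_sV.
Qed.

Lemma norm_sandwichB_le (R : realDomainType) (t p p' q q' b b' dp dq : R) :
  0 <= p <= t -> 0 <= p' <= t -> 0 <= q <= t -> 0 <= q' <= t -> 0 <= b ->
  `|p' - p| <= dp -> `|q' - q| <= dq ->
  `|p' * b' * q' - p * b * q| <= `|b' - b| * t ^+ 2 + b * (dp + dq) * t.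
Proof.
move=> /andP[p_ge0 p_le] /andP[p'_ge0 p'_le] /andP[q_ge0 q_le] /andP[q'_ge0 q'_le]
  b_ge0 dp_le dq_le.
have -> : p' * b' * q' - p * b * q
    = (b' - b) * (p' * q') + b * ((p' - p) * q' + p * (q' - q)) by ring.
apply: le_trans (ler_normD _ _) _; apply: lerD.
  by rewrite normrM ler_wpM2l // ger0_norm ?mulr_ge0 // expr2 ler_pM.
rewrite normrM (ger0_norm b_ge0) -mulrA ler_wpM2l //.
apply: le_trans (ler_normD _ _) _.
rewrite !normrM (ger0_norm q'_ge0) (ger0_norm p_ge0) mulrDl [dq * t]mulrC.
by rewrite lerD // ler_pM.
Qed.

Lemma sum_mulD_sym (R : pzRingType) n (B : 'M[R]_n) (f : 'I_n -> R) :
  (forall u v, B u v = B v u) ->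
  \sum_u \sum_v B u v * (f u + f v) = (\sum_u (\sum_v B u v) * f u) *+ 2.
Proof.
move=> B_sym; under eq_bigr do under eq_bigr do rewrite mulrDr.
under eq_bigr do rewrite big_split /= -mulr_suml.
rewrite big_split /= mulr2n; congr (_ + _); rewrite exchange_big /=.
by apply: eq_bigr => v _; rewrite mulr_suml; apply: eq_bigr => u _; rewrite B_sym.
Qed.

Lemma bigminn_le (T : eqType) (r : seq T) x (F : T -> nat) i :
  i \in r -> (\big[minn/x]_(j <- r) F j <= F i)%N.
Proof.
elim: r => [//|a r IHr]; rewrite inE big_cons => /orP[/eqP->|/IHr].
  exact: geq_minl.
exact: leq_trans (geq_minr _ _).
Qed.

Section Degrees.
Variable n : nat.
Implicit Types (F G : {set {set 'I_n}}) (u v w : 'I_n).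

Lemma deg_nbr F u : deg F u = #|[set v | [set u; v] \in F]|.
Proof. by apply: eq_card => v; rewrite !inE finset.setUC. Qed.

Lemma set2_inj u v w : [set u; v] = [set u; w] -> v = w.
Proof.
move=> uv_uw; have : v \in [set u; w] by rewrite -uv_uw !inE eqxx orbT.
have : w \in [set u; v] by rewrite uv_uw !inE eqxx orbT.
by rewrite !inE => /orP[/eqP->|/eqP->//] /orP[/eqP->|/eqP->].
Qed.

Lemma deg_le_card_incident F u : (deg F u <= #|[set e in F | u \in e]|)%N.
Proof.
rewrite deg_nbr -(card_in_imset (f := fun v => [set u; v])); last first.
  by move=> v w _ _; apply: set2_inj.
apply/subset_leq_card/fintype.subsetP => _ /imsetP[v uv_in ->].
by move: uv_in; rewrite !inE eqxx andbT.
Qed.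

Lemma sum_deg_le F : simple_edges F -> (\sum_u deg F u <= 2 * #|F|)%N.
Proof.
move=> simpleF; apply: (@leq_trans (\sum_u #|[set e in F | u \in e]|)).
  by apply: leq_sum => u _; apply: deg_le_card_incident.
rewrite (eq_bigr (fun u => \sum_(e in F) (u \in e : nat))%N); last first.
  move=> u _; rewrite -sum1_card big_mkcond [RHS]big_mkcond /=.
  by apply: eq_bigr => e _; rewrite !inE; case: (e \in F); case: (u \in e).
rewrite exchange_big /= -sum1_card big_distrr /= leq_sum // => e e_in.
rewrite muln1 -(simpleF e e_in) -sum1_card [leqRHS]big_mkcond.
by apply: leq_sum => i _; case: (i \in e).
Qed.

Lemma symdiffC F G : symdiff F G = symdiff G F.
Proof. by rewrite /symdiff finset.setUC. Qed.

Lemma simple_edges_symdiff F G :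
  simple_edges F -> simple_edges G -> simple_edges (symdiff F G).
Proof. by move=> sF sG e; rewrite !inE => /orP[]/andP[_]; [apply: sF | apply: sG]. Qed.

Lemma deg_le_symdiff F G u : (deg F u <= deg G u + deg (symdiff F G) u)%N.
Proof.
rewrite !deg_nbr; apply: leq_trans (leq_card_setU _ _).
apply/subset_leq_card/fintype.subsetP => v; rewrite !inE => ->.
by case: (_ \in G).
Qed.

End Degrees.

Section Adjacency.
Variables (R : nzRingType) (n : nat).
Implicit Types (F : {set {set 'I_n}}) (u v : 'I_n).

Lemma adjC F u v : adj R F u v = adj R F v u.
Proof. by rewrite !mxE finset.setUC. Qed.

Lemma sum_adj_row F u : \sum_v adj R F u v = (deg F u)%:R.
Proof.
rewrite deg_nbr -sum1_card natr_sum [RHS]big_mkcond /=.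
by apply: eq_bigr => v _; rewrite mxE inE; case: (_ \in F).
Qed.

Lemma sum_adj1_row F u :
  \sum_v (adj R F + 1%:M) u v = (aug_deg F u)%:R.
Proof.
rewrite (eq_bigr (fun v => adj R F u v + (u == v)%:R)); last first.
  by move=> v; rewrite !mxE.
rewrite big_split /= sum_adj_row (bigD1 u) //= eqxx big1 ?addr0 ?natr1 //.
by move=> v; rewrite eq_sym => /negbTE ->.
Qed.

End Adjacency.

Lemma adj_symdiff (R : numDomainType) n (E E' : {set {set 'I_n}}) u v :
  adj R (symdiff E E') u v = `|adj R E' u v - adj R E u v|.
Proof.
rewrite !mxE !inE.
by case: (_ \in E); case: (_ \in E');
  rewrite ?subrr ?normr0 ?subr0 ?sub0r ?normrN ?normr1.
Qed.

Lemma norm_adj_entry (R : rcfType) n (F : {set {set 'I_n}}) u v :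
  norm_adj R F u v = (Num.sqrt (aug_deg F u)%:R)^-1 * (adj R F + 1%:M) u v
                     * (Num.sqrt (aug_deg F v)%:R)^-1.
Proof. by rewrite /norm_adj /Dinvsqrt mul_diag_mx mul_mx_diag !mxE. Qed.

Section ExtremeDegrees.
Variables (n : nat) (E E' : {set {set 'I_n}}).

Lemma dmin_le_aug_deg v :
  (dmin E E' <= aug_deg E v)%N /\ (dmin E E' <= aug_deg E' v)%N.
Proof.
have : (dmin E E' <= minn (aug_deg E v) (aug_deg E' v))%N.
  by apply: bigminn_le; rewrite mem_index_enum.
by rewrite leq_min => /andP.
Qed.

Lemma aug_deg_le_dmax v :
  (aug_deg E v <= dmax E E')%N /\ (aug_deg E' v <= dmax E E')%N.
Proof.
have : (maxn (aug_deg E v) (aug_deg E' v) <= dmax E E')%N.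
  exact: (@leq_bigmax _ (fun v => maxn (aug_deg E v) (aug_deg E' v))).
by rewrite geq_max => /andP.
Qed.

Lemma dmin_gt0 : (0 < n)%N -> (0 < dmin E E')%N.
Proof.
move=> n_gt0; apply: (big_ind (fun k => 0 < k)%N) => // [k l|v _].
  by rewrite leq_min => ->.
by rewrite leq_min.
Qed.

End ExtremeDegrees.

Section Perturbation.
Variables (R : realType) (n : nat) (E E' : {set {set 'I_n}}).
Hypothesis n_gt0 : (0 < n)%N.

Local Notation m := (dmin E E').
Local Notation ds u := ((deg (symdiff E E') u)%:R : R).
Local Notation dinvsqrt F u := ((Num.sqrt (aug_deg F u)%:R)^-1 : R).
Let t : R := (Num.sqrt m%:R)^-1.

Let m_gt0 : 0 < m%:R :> R.
Proof. by rewrite ltr0n dmin_gt0. Qed.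

Lemma dinvsqrt_bound (F : {set {set 'I_n}}) u :
  (m <= aug_deg F u)%N -> 0 <= dinvsqrt F u <= t.
Proof.
move=> m_le; rewrite invr_ge0 sqrtr_ge0 lef_pV2 ?posrE ?sqrtr_gt0 ?ltr0Sn //.
by rewrite ler_sqrt ?ler_nat.
Qed.

Lemma dinvsqrtB_le u : `|dinvsqrt E' u - dinvsqrt E u| <= ds u * t ^+ 3.
Proof.
have [m_le_E m_le_E'] := dmin_le_aug_deg E E' u.
apply: le_trans (norm_invsqrtB_le m_gt0 _ _) _; rewrite ?ler_nat //.
rewrite ler_wpM2r ?exprn_ge0 ?invr_ge0 ?sqrtr_ge0 //.
rewrite /aug_deg -!natr1 opprD addrACA subrr addr0 distrC ler_norml.
have := deg_le_symdiff E E' u; have := deg_le_symdiff E' E u.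
rewrite symdiffC -!(ler_nat R) !natrD; lra.
Qed.

Lemma norm_adjB_entry_le u v :
  `|(norm_adj R E' - norm_adj R E) u v|
    <= adj R (symdiff E E') u v * t ^+ 2
       + (adj R E + 1%:M) u v * (ds u + ds v) * t ^+ 4.
Proof.
have [mu mu'] := dmin_le_aug_deg E E' u; have [mv mv'] := dmin_le_aug_deg E E' v.
have -> : (norm_adj R E' - norm_adj R E) u v = norm_adj R E' u v - norm_adj R E u v.
  by rewrite !mxE.
rewrite !norm_adj_entry adj_symdiff.
have B_ge0 : 0 <= (adj R E + 1%:M) u v by rewrite !mxE addr_ge0 ?ler0n.
apply: le_trans (norm_sandwichB_le _ (dinvsqrt_bound mu) (dinvsqrt_bound mu')
  (dinvsqrt_bound mv) (dinvsqrt_bound mv') B_ge0 (dinvsqrtB_le u) (dinvsqrtB_le v)) _.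
have -> : (adj R E' + 1%:M) u v - (adj R E + 1%:M) u v = adj R E' u v - adj R E u v.
  by rewrite mxE [X in _ - X]mxE opprD addrACA subrr addr0.
by rewrite -mulrDl exprSr !mulrA.
Qed.

Hypotheses (simpleE : simple_edges E) (simpleE' : simple_edges E').

Lemma sum_norm_adjB_le :
  \sum_u \sum_v `|(norm_adj R E' - norm_adj R E) u v|
    <= (2 + 4 * ((dmax E E')%:R / m%:R)) * (#|symdiff E E'|%:R / m%:R).
Proof.
set B := adj R E + 1%:M; set Ds := \sum_u ds u.
have B_sym u v : B u v = B v u.
  by rewrite mxE [RHS]mxE adjC !mxE [u == v]eq_sym.
have Ds_le : Ds <= 2 * #|symdiff E E'|%:R.
  by rewrite /Ds -natr_sum -natrM ler_nat; apply/sum_deg_le/simple_edges_symdiff.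
have weighted_le : \sum_u (\sum_v B u v) * ds u <= (dmax E E')%:R * Ds.
  rewrite /Ds mulr_sumr ler_sum // => u _.
  by rewrite sum_adj1_row ler_wpM2r ?ler_nat //; case: (aug_deg_le_dmax E E' u).
apply: le_trans (ler_sum _ (fun u _ => ler_sum _ (fun v _ => norm_adjB_entry_le u v))) _.
under eq_bigr do rewrite big_split /= -!mulr_suml sum_adj_row.
rewrite big_split /= -!mulr_suml sum_mulD_sym // -/Ds.
have t2 : t ^+ 2 = m%:R^-1 by rewrite exprVn sqr_sqrtr ?ltW.
have t4 : t ^+ 4 = m%:R^-1 ^+ 2 by rewrite -t2 -exprM.
have -> : (2 + 4 * ((dmax E E')%:R / m%:R)) * (#|symdiff E E'|%:R / m%:R)
    = 2 * #|symdiff E E'|%:R * t ^+ 2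
      + ((dmax E E')%:R * (2 * #|symdiff E E'|%:R)) *+ 2 * t ^+ 4.
  by rewrite t4 t2 mulr2n; ring.
have t_ge0 k : 0 <= t ^+ k by rewrite exprn_ge0 ?invr_ge0 ?sqrtr_ge0.
rewrite lerD ?ler_wpM2r // lerMn2r /= (le_trans weighted_le) // ler_wpM2l //.
Qed.

End Perturbation.

Unset Implicit Arguments.

Theorem lemma5p3 (R : realType) (c : R) :
  exists C : R,
  forall (n : nat) (E E' : {set {set 'I_n}}) (K : nat),
    (0 < n)%N ->
    simple_edges E -> simple_edges E' ->
    (#|symdiff E E'| <= K)%N ->
    (dmax E E')%:R / (dmin E E')%:R <= c ->
    spectral_norm (norm_adj R E' - norm_adj R E)
      <= C * (K%:R / (dmin E E')%:R).
Proof.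
exists (2 + 4 * c) => n E E' K n_gt0 simpleE simpleE' card_le ratio_le.
apply: le_trans (spectral_norm_le_sum_norm _) _.
apply: le_trans (sum_norm_adjB_le R n_gt0 simpleE simpleE') _.
have dmin_ge0 : 0 <= (dmin E E')%:R^-1 :> R by rewrite invr_ge0 ler0n.
apply: ler_pM.
- by rewrite addr_ge0 ?mulr_ge0 ?ler0n.
- by rewrite mulr_ge0 ?ler0n.
- by rewrite lerD2l ler_wpM2l.
- by rewrite ler_wpM2r ?ler_nat.
Qed.
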